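(* In the multi-colored system with $n\ge2$, let $\mathbf a_0\in(0,\infty)^n$ with $\rho_0=a_0^1+\dots+a_0^n$ in the interior of the domain of $\varphi$. Then the Frame condition (FC) holds at $\mathbf a_0$ (equivalently: $\Gamma_{ij}(\mathbf a_0)=0$ for $i\ne j$ and $\tilde g_i(\mathbf a_0)\Gamma_{jj}(\mathbf a_0)=\tilde g_j(\mathbf a_0)\Gamma_{ii}(\mathbf a_0)$ for all $i\ne j$) if and only if $\varphi'(\rho_0)=\varphi(\rho_0)/\rho_0$, which in turn is equivalent to $\sigma^2(\rho_0)=\rho_0$, where $\sigma^2(\rho)$ is the variance of $\nu_\rho$.
   Context: Multi-colored zero-range system: given a single-species rate $g:\mathbb Z_+\to[0,\infty)$ with $g(k)=0\iff k=0$, define $g_i(\mathbf k)=g(|\mathbf k|)k^i/|\mathbf k|$ for $\mathbf k\in\mathbb Z_+^n$, $|\mathbf k|=\sum_ik^i$. For the single-species system, $\nu_\rho(k)=Z_{\varphi}^{-1}\varphi^k/g(k)!$ with $g(k)!=g(1)\cdots g(k)$, $Z_\varphi=\sum_k\varphi^k/g(k)!$, and $\varphi=\varphi(\rho)$ the fugacity chosen so that $\nu_\rho$ has mean $\rho$. The multi-colored invariant law of density $\mathbf a$ is $\nu_{\mathbf a}(\mathbf k)=\nu_\rho(|\mathbf k|)\frac{|\mathbf k|!}{k^1!\cdots k^n!}\prod_i(a^i/\rho)^{k^i}$, $\rho=\sum_ia^i$. $\tilde g_i(\mathbf a)=E_{\nu_{\mathbf a}}[g_i]$; $\Gamma(\mathbf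 a)$ is the covariance matrix of $\mathbf k$ under $\nu_{\mathbf a}$. Frame condition (FC) at $\mathbf a_0$: there is $\lambda$ with $\partial_{a^i}\tilde g_i(\mathbf a_0)=\lambda$ for all $i$ and $\partial_{a^j}\tilde g_i(\mathbf a_0)=0$ for $i\ne j$. *)

From Stdlib Require Import Reals Lra Lia Arith List ClassicalEpsilon.
Open Scope R_scope.

(** Value of a real series: the sum if it converges, an arbitrary real otherwise. *)
Definition ex_series (u : nat -> R) : Prop := exists l, infinite_sum u l.
Definition Series (u : nat -> R) : R :=
  epsilon (inhabits 0) (fun l => infinite_sum u l).

Fixpoint gfact (g : nat -> R) (k : nat) : R :=
  match k with O => 1 | S k' => gfact g k' * g (S k') end.

Definition Zterm (g : nat -> R) (phi : R) (k : nat) : R := phi ^ k / gfact g k.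
Definition Z (g : nat -> R) (phi : R) : R := Series (Zterm g phi).
Definition M1 (g : nat -> R) (phi : R) : R :=
  Series (fun k => INR k * Zterm g phi k).

(** fugacities for which nu is a probability law with finite mean *)
Definition admissible (g : nat -> R) (phi : R) : Prop :=
  0 <= phi /\ ex_series (Zterm g phi) /\ ex_series (fun k => INR k * Zterm g phi k).

Definition dens (g : nat -> R) (phi : R) : R := M1 g phi / Z g phi.

(** the domain of rho |-> phi(rho) *)
Definition in_dom (g : nat -> R) (rho : R) : Prop :=
  exists phi, admissible g phi /\ dens g phi = rho.

Definition interior_dom (g : nat -> R) (rho : R) : Prop :=
  exists eps, 0 < eps /\ forall r, Rabs (r - rho) < eps -> in_dom g r.

Definition phi_of (g : nat -> R) (rho : R) : R :=
  epsilon (inhabits 0) (fun phi => admissible g phi /\ dens g phi = rho).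

Definition nu (g : nat -> R) (rho : R) (m : nat) : R :=
  Zterm g (phi_of g rho) m / Z g (phi_of g rho).

Definition sigma2 (g : nat -> R) (rho : R) : R :=
  Series (fun m => INR m ^ 2 * nu g rho m) - (Series (fun m => INR m * nu g rho m)) ^ 2.

(** colours are indexed 0..n-1; a density vector is a : nat -> R (entries i<n);
    a configuration k in Z_+^n is a list of length n, k^i = nth i k 0. *)
Fixpoint lsum (l : list nat) : nat :=
  match l with nil => O | x :: t => (x + lsum t)%nat end.

Fixpoint vsum (a : nat -> R) (n : nat) : R :=
  match n with O => 0 | S n' => vsum a n' + a n' end.

(** sum of F k over all k in Z_+^n with |k| = m *)
Fixpoint comp_sum (n m : nat) (F : list nat -> R) : R :=
  match n with
  | O => if Nat.eqb m 0 then F nil else 0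
  | S n' => sum_f_R0 (fun j => comp_sum n' (m - j) (fun l => F (j :: l))) m
  end.

Fixpoint wprod (p : nat -> R) (k : list nat) (off : nat) : R :=
  match k with
  | nil => 1
  | x :: t => p off ^ x / INR (fact x) * wprod p t (S off)
  end.

Definition nu_a (g : nat -> R) (n : nat) (a : nat -> R) (k : list nat) : R :=
  let rho := vsum a n in
  nu g rho (lsum k) * INR (fact (lsum k)) * wprod (fun i => a i / rho) k 0.

(** expectation under nu_a (sum over Z_+^n, grouped by |k|) *)
Definition Ea (g : nat -> R) (n : nat) (a : nat -> R) (f : list nat -> R) : R :=
  Series (fun m => comp_sum n m (fun k => f k * nu_a g n a k)).

Definition coord (k : list nat) (i : nat) : R := INR (nth i k O).

Definition g_i (g : nat -> R) (i : nat) (k : list nat) : R :=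
  if Nat.eqb (lsum k) 0 then 0 else g (lsum k) * coord k i / INR (lsum k).

Definition gtilde (g : nat -> R) (n i : nat) (a : nat -> R) : R :=
  Ea g n a (g_i g i).

Definition Gamma (g : nat -> R) (n : nat) (a : nat -> R) (i j : nat) : R :=
  Ea g n a (fun k => coord k i * coord k j)
  - Ea g n a (fun k => coord k i) * Ea g n a (fun k => coord k j).

Definition upd (a : nat -> R) (j : nat) (t : R) : nat -> R :=
  fun i => if Nat.eqb i j then t else a i.

Definition has_partial (F : (nat -> R) -> R) (a : nat -> R) (j : nat) (L : R) : Prop :=
  derivable_pt_lim (fun t => F (upd a j t)) (a j) L.

Definition FC (g : nat -> R) (n : nat) (a0 : nat -> R) : Prop :=
  exists lam : R,
    (forall i, (i < n)%nat -> has_partial (gtilde g n i) a0 i lam) /\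
    (forall i j, (i < n)%nat -> (j < n)%nat -> i <> j ->
       has_partial (gtilde g n i) a0 j 0).

From Pilot Require Import Defs.
From Coquelicot Require Import Coquelicot.
From Stdlib Require Import Reals Lra Lia Arith List ClassicalEpsilon.
Open Scope R_scope.

(** All quantities are computed explicitly, and each of the three conditions
   of the proposition turns out to be equivalent to sigma^2(rho0) = rho0.

   Summing over k in Z_+^n with |k| = m, the multinomial
      weights prod_i p_i^(k_i)/k_i! add up to (sum_i p_i)^m/m!; removing one
      particle of colour i gives their first and second factorial moments.
   2. Level sums.  On the level |k| = m, nu_a is nu_rho(m) times a multinomial
      law with proportions a^i/rho, so the level sums of g_i, k^i, k^i k^j
      are single-species terms weighted by these proportions.
   3. Single species.  With c_k = 1/g(k)!, Z, M1 and M2 are power series in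
      the fugacity; the density M1/Z has derivative D with phi D(phi) equal to
      the variance, hence positive.  The density is strictly increasing (up to
      an admissible boundary point, by Abel's theorem), and the inverse
      function theorem gives phi'(rho) = phi(rho)/sigma^2(rho) at interior rho.
   4. Consequences.  gtilde_i(a) = (a^i/rho) phi(rho),
      Gamma_ij = (a^i a^j/rho^2)(sigma^2 - rho) + delta_ij a^i, and
      d gtilde_i/d a^j = delta_ij phi/rho + (a^i/rho)(phi/sigma^2 - phi/rho);
      with n >= 2 colours the off-diagonal entries force sigma^2 = rho. *)

(** ** Sums over compositions and multinomial weights *)

Lemma comp_sum_ext_lsum n : forall m F F',
  (forall k, lsum k = m -> F k = F' k) -> comp_sum n m F = comp_sum n m F'.
Proof.
  induction n as [|n IH]; intros m F F' H; simpl.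
  - destruct (Nat.eqb_spec m 0); [subst; apply H; reflexivity|reflexivity].
  - apply sum_eq; intros j Hj. apply IH. intros k Hk. apply H. simpl. lia.
Qed.

Lemma comp_sum_ext_length n : forall m F F',
  (forall k, length k = n -> F k = F' k) -> comp_sum n m F = comp_sum n m F'.
Proof.
  induction n as [|n IH]; intros m F F' H; simpl.
  - destruct (Nat.eqb_spec m 0); [apply H; reflexivity|reflexivity].
  - apply sum_eq; intros j Hj. apply IH. intros k Hk. apply H. simpl. lia.
Qed.

Lemma comp_sum_ext n m F F' :
  (forall k, F k = F' k) -> comp_sum n m F = comp_sum n m F'.
Proof. intros H; apply comp_sum_ext_lsum; auto. Qed.

Lemma comp_sum_scal n : forall m c F,
  comp_sum n m (fun k => c * F k) = c * comp_sum n m F.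
Proof.
  induction n as [|n IH]; intros m c F; simpl.
  - destruct (Nat.eqb m 0); ring.
  - rewrite scal_sum. apply sum_eq; intros j Hj. rewrite IH. ring.
Qed.

Lemma comp_sum_plus n : forall m F G,
  comp_sum n m (fun k => F k + G k) = comp_sum n m F + comp_sum n m G.
Proof.
  induction n as [|n IH]; intros m F G; simpl.
  - destruct (Nat.eqb m 0); ring.
  - rewrite <- plus_sum. apply sum_eq; intros j Hj. apply IH.
Qed.

Lemma comp_sum_succ n m F :
  comp_sum (S n) m F = sum_f_R0 (fun j => comp_sum n (m - j) (fun l => F (j :: l))) m.
Proof. reflexivity. Qed.

Lemma comp_sum_level0 n : forall F, comp_sum n 0 F = F (repeat 0%nat n).
Proof. induction n as [|n IH]; intros F; simpl; auto. Qed.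

Lemma coord_zero_vector n i : coord (repeat 0%nat n) i = 0.
Proof. unfold coord. revert i; induction n; intros [|i]; simpl; auto. Qed.

Lemma coord_cons_succ x t i : coord (x :: t) (S i) = coord t i.
Proof. reflexivity. Qed.

Lemma lsum_zero_vector n : lsum (repeat 0%nat n) = 0%nat.
Proof. induction n; simpl; auto. Qed.

Lemma INR_fact_pos k : 0 < INR (fact k).
Proof. apply lt_0_INR, lt_O_fact. Qed.

Lemma INR_fact_succ k : INR (fact (S k)) = INR (S k) * INR (fact k).
Proof. rewrite <- mult_INR. reflexivity. Qed.

Lemma vsum_ext f f' n : (forall i, (i < n)%nat -> f i = f' i) -> vsum f n = vsum f' n.
Proof. intros H; induction n; simpl; auto. rewrite IHn, H; auto. Qed.

Lemma vsum_shift f n : vsum f (S n) = f 0%nat + vsum (fun i => f (S i)) n.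
Proof. induction n as [|n IH]; simpl in *; [ring|]. rewrite IH. ring. Qed.

Lemma vsum_scal a n c : vsum (fun i => a i * c) n = vsum a n * c.
Proof. induction n; simpl; [ring|rewrite IHn; ring]. Qed.

Lemma vsum_pos a n : (0 < n)%nat -> (forall i, (i < n)%nat -> 0 < a i) -> 0 < vsum a n.
Proof.
  induction n as [|[|n] IH]; intros Hn H; [lia|simpl; specialize (H 0%nat ltac:(lia)); lra|].
  change (0 < vsum a (S n) + a (S n)).
  pose proof (H (S n) ltac:(lia)). assert (0 < vsum a (S n)) by (apply IH; auto; lia). lra.
Qed.

Lemma multinomial_theorem n : forall m p off,
  comp_sum n m (fun k => wprod p k off) = vsum (fun i => p (off + i)%nat) n ^ m / INR (fact m).
Proof.
  induction n as [|n IH]; intros m p off.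
  - simpl. destruct m; simpl; [field|unfold Rdiv; ring].
  - rewrite vsum_shift, Nat.add_0_r. simpl comp_sum.
    rewrite binomial. unfold Rdiv. rewrite Rmult_comm, scal_sum.
    apply sum_eq; intros j Hj.
    rewrite (comp_sum_scal n (m - j) (p off ^ j * / INR (fact j))), IH.
    rewrite (vsum_ext (fun i => p (S off + i)%nat) (fun i => p (off + S i)%nat))
      by (intros; f_equal; lia).
    unfold C. pose proof (INR_fact_pos j). pose proof (INR_fact_pos (m - j)).
    pose proof (INR_fact_pos m). field; lra.
Qed.

Fixpoint incr_at (k : list nat) (i : nat) : list nat :=
  match k with
  | nil => nil
  | x :: t => match i with O => S x :: t | S i' => x :: incr_at t i' end
  end.

Lemma coord_incr_at k : forall i j, (i < length k)%nat ->
  coord (incr_at k i) j = coord k j + (if Nat.eqb i j then 1 else 0).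
Proof.
  induction k as [|x t IH]; intros i j Hi; simpl in Hi; [lia|].
  destruct i as [|i], j as [|j]; unfold coord; simpl incr_at; simpl nth.
  - rewrite S_INR. simpl. ring.
  - simpl. ring.
  - simpl. ring.
  - specialize (IH i j ltac:(lia)). unfold coord in IH. exact IH.
Qed.

(* Shift identity for multinomial weights: since k_i p^(k_i)/k_i! =
   p * p^(k_i - 1)/(k_i - 1)!, removing one particle of colour i gives
   sum_{|k|=m+1} k_i w(k) G(k) = p_(off+i) sum_{|k|=m} w(k) G(k + e_i). *)
Lemma comp_sum_shift p n : forall i off m G, (i < n)%nat ->
  comp_sum n (S m) (fun k => coord k i * wprod p k off * G k)
  = p (off + i)%nat * comp_sum n m (fun k => wprod p k off * G (incr_at k i)).
Proof.
  induction n as [|n IH]; intros i off m G Hi; [lia|].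
  rewrite !comp_sum_succ. destruct i as [|i].
  - (* the first colour: the term j = 0 vanishes, the others shift down *)
    rewrite (decomp_sum _ (S m)) by lia. simpl pred.
    rewrite (comp_sum_ext n (S m - 0) _ (fun l => 0 * (wprod p l (S off) * G (0%nat :: l))))
      by (intros l; unfold coord; simpl; ring).
    rewrite comp_sum_scal, Rmult_0_l, Rplus_0_l, scal_sum.
    apply sum_eq; intros j Hj. rewrite Nat.add_0_r, Rmult_comm, <- comp_sum_scal.
    replace (S m - S j)%nat with (m - j)%nat by lia.
    apply comp_sum_ext. intros l. unfold coord; cbn [nth incr_at wprod].
    rewrite INR_fact_succ. pose proof (INR_fact_pos j). pose proof (lt_0_INR (S j) ltac:(lia)).
    simpl pow. field. lra.
  - (* a later colour: in the term j = m+1 every particle has the first colour,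
       the other terms follow by induction *)
    rewrite (tech5 _ m), Nat.sub_diag, comp_sum_level0.
    rewrite coord_cons_succ, coord_zero_vector, !Rmult_0_l, Rplus_0_r, scal_sum.
    apply sum_eq; intros j Hj. replace (S m - j)%nat with (S (m - j)) by lia.
    transitivity (comp_sum n (S (m - j))
      (fun l => coord l i * wprod p l (S off) * (p off ^ j / INR (fact j) * G (j :: l)))).
    { apply comp_sum_ext. intros l. rewrite coord_cons_succ. simpl. ring. }
    rewrite IH by lia. replace (S off + i)%nat with (off + S i)%nat by lia.
    rewrite (Rmult_comm _ (p _)), <- !comp_sum_scal. apply comp_sum_ext. intros l. simpl. ring.
Qed.

Section MultinomialMoments.
Variables (p : nat -> R) (n : nat).
Hypothesis p_sum : vsum p n = 1.

Lemma multinomial_mass m : comp_sum n m (fun k => wprod p k 0) = / INR (fact m).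
Proof. rewrite multinomial_theorem, (vsum_ext _ p), p_sum, pow1 by reflexivity. unfold Rdiv; ring. Qed.

Lemma multinomial_mean m i : (i < n)%nat ->
  comp_sum n m (fun k => coord k i * wprod p k 0) = INR m * p i / INR (fact m).
Proof.
  intros Hi. destruct m as [|m].
  - rewrite comp_sum_level0, coord_zero_vector. simpl. field.
  - rewrite (comp_sum_ext n (S m) _ (fun k => coord k i * wprod p k 0 * 1)) by (intros; ring).
    rewrite comp_sum_shift by auto.
    rewrite (comp_sum_ext n m _ (fun k => wprod p k 0)), multinomial_mass by (intros; ring).
    rewrite INR_fact_succ. pose proof (INR_fact_pos m). pose proof (lt_0_INR (S m) ltac:(lia)).
    change (0 + i)%nat with i. field; lra.
Qed.

Lemma multinomial_second_moment m i j : (i < n)%nat -> (j < n)%nat ->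
  comp_sum n m (fun k => coord k i * coord k j * wprod p k 0) =
  INR m * (INR m - 1) * p i * p j / INR (fact m)
  + (if Nat.eqb i j then INR m * p i / INR (fact m) else 0).
Proof.
  intros Hi Hj. destruct m as [|m].
  - rewrite comp_sum_level0, !coord_zero_vector. simpl. destruct (Nat.eqb i j); field.
  - rewrite (comp_sum_ext n (S m) _ (fun k => coord k i * wprod p k 0 * coord k j))
      by (intros; ring).
    rewrite comp_sum_shift by auto.
    rewrite (comp_sum_ext_length n m _ (fun k => coord k j * wprod p k 0
                + (if Nat.eqb i j then 1 else 0) * wprod p k 0))
      by (intros k Hk; rewrite coord_incr_at by lia; ring).
    rewrite comp_sum_plus, comp_sum_scal, multinomial_mean, multinomial_mass by auto.
    rewrite INR_fact_succ, S_INR. pose proof (INR_fact_pos m). pose proof (pos_INR m).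
    change (0 + i)%nat with i. destruct (Nat.eqb i j); field; lra.
Qed.

End MultinomialMoments.

(** ** Level sums of the multi-colored invariant law *)

(* On the level |k| = m, nu_a is nu_rho(m) times the multinomial law of m
   particles with colour proportions a^i/rho. *)
Section LevelSums.
Variables (g : nat -> R) (n : nat) (a : nat -> R).
Hypothesis rho_ne0 : vsum a n <> 0.

Lemma colour_proportions_sum : vsum (fun i => a i / vsum a n) n = 1.
Proof. unfold Rdiv. rewrite vsum_scal. field. exact rho_ne0. Qed.

Lemma nu_a_level k m : lsum k = m ->
  nu_a g n a k = nu g (vsum a n) m * INR (fact m) * wprod (fun i => a i / vsum a n) k 0.
Proof. intros H; subst; reflexivity. Qed.

Lemma level_sum_g_i (g_zero : g O = 0) i m : (i < n)%nat ->
  comp_sum n m (fun k => g_i g i k * nu_a g n a k)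
  = a i / vsum a n * (g m * nu g (vsum a n) m).
Proof.
  intros Hi. destruct m as [|m].
  - rewrite comp_sum_level0. unfold g_i. rewrite lsum_zero_vector, g_zero. simpl. ring.
  - rewrite (comp_sum_ext_lsum n (S m) _ (fun k =>
        g (S m) / INR (S m) * nu g (vsum a n) (S m) * INR (fact (S m))
        * (coord k i * wprod (fun i => a i / vsum a n) k 0))).
    2:{ intros k Hk. rewrite (nu_a_level k (S m) Hk). unfold g_i. rewrite Hk. simpl Nat.eqb; cbv iota.
        pose proof (lt_0_INR (S m) ltac:(lia)). field. lra. }
    rewrite comp_sum_scal, multinomial_mean by (auto using colour_proportions_sum).
    pose proof (INR_fact_pos (S m)). pose proof (lt_0_INR (S m) ltac:(lia)). field. lra.
Qed.

Lemma level_sum_coord i m : (i < n)%nat ->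
  comp_sum n m (fun k => coord k i * nu_a g n a k)
  = a i / vsum a n * (INR m * nu g (vsum a n) m).
Proof.
  intros Hi.
  rewrite (comp_sum_ext_lsum n m _ (fun k => nu g (vsum a n) m * INR (fact m)
        * (coord k i * wprod (fun i => a i / vsum a n) k 0)))
    by (intros k Hk; rewrite (nu_a_level k m Hk); ring).
  rewrite comp_sum_scal, multinomial_mean by (auto using colour_proportions_sum).
  pose proof (INR_fact_pos m). field. lra.
Qed.

Lemma level_sum_coord2 i j m : (i < n)%nat -> (j < n)%nat ->
  comp_sum n m (fun k => coord k i * coord k j * nu_a g n a k)
  = a i / vsum a n * (a j / vsum a n) * (INR m * (INR m - 1) * nu g (vsum a n) m)
    + (if Nat.eqb i j then a i / vsum a n * (INR m * nu g (vsum a n) m) else 0).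
Proof.
  intros Hi Hj.
  rewrite (comp_sum_ext_lsum n m _ (fun k => nu g (vsum a n) m * INR (fact m)
        * (coord k i * coord k j * wprod (fun i => a i / vsum a n) k 0)))
    by (intros k Hk; rewrite (nu_a_level k m Hk); ring).
  rewrite comp_sum_scal, multinomial_second_moment by (auto using colour_proportions_sum).
  pose proof (INR_fact_pos m). destruct (Nat.eqb i j); field; lra.
Qed.

End LevelSums.

(** ** Real series and power series *)

Lemma Series_of_sum u l : infinite_sum u l -> Defs.Series u = l.
Proof.
  intros H. unfold Defs.Series.
  apply (uniqueness_sum u); [|exact H].
  exact (epsilon_spec (inhabits 0) (fun l => infinite_sum u l) (ex_intro _ l H)).
Qed.

Lemma infinite_sum_ext u v l : (forall k, u k = v k) -> infinite_sum u l -> infinite_sum v l.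
Proof.
  intros E H eps Heps. destruct (H eps Heps) as [N HN]. exists N. intros k Hk.
  rewrite <- (sum_eq u v) by auto. apply HN; auto.
Qed.

Lemma infinite_sum_value u l l' : infinite_sum u l -> l = l' -> infinite_sum u l'.
Proof. intros H <-. exact H. Qed.

Lemma infinite_sum_lin u v lu lv a b : infinite_sum u lu -> infinite_sum v lv ->
  infinite_sum (fun k => a * u k + b * v k) (a * lu + b * lv).
Proof.
  intros Hu%is_series_Reals Hv%is_series_Reals. apply is_series_Reals.
  exact (is_series_plus _ _ _ _ (is_series_scal_l a _ _ Hu) (is_series_scal_l b _ _ Hv)).
Qed.

Lemma infinite_sum_scal u lu a : infinite_sum u lu -> infinite_sum (fun k => a * u k) (a * lu).
Proof. intros Hu%is_series_Reals. apply is_series_Reals, (is_series_scal_l a _ _ Hu). Qed.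

Lemma infinite_sum_from_1 u l : u 0%nat = 0 -> infinite_sum (fun k => u (S k)) l -> infinite_sum u l.
Proof.
  intros H0 H eps Heps. destruct (H eps Heps) as [N HN]. exists (S N). intros [|k] Hk; [lia|].
  rewrite (decomp_sum u (S k)), H0, Rplus_0_l by lia. apply HN. lia.
Qed.

Lemma PSeries_sum a x : ex_pseries a x -> infinite_sum (fun k => a k * x ^ k) (PSeries a x).
Proof. intros H. apply is_pseries_Reals, PSeries_correct, H. Qed.

Lemma ex_pseries_of_sum a x l : infinite_sum (fun k => a k * x ^ k) l -> ex_pseries a x.
Proof. intros H. exists l. apply is_pseries_Reals, H. Qed.

(* [mulidx a] has coefficients k a_k; it corresponds to x d/dx. *)
Definition mulidx (a : nat -> R) (k : nat) : R := INR k * a k.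

Lemma PSeries_mulidx a x : PSeries (mulidx a) x = x * PSeries (PS_derive a) x.
Proof.
  rewrite <- PSeries_incr_1. apply PSeries_ext.
  intros [|k]; unfold mulidx, PS_derive, PS_incr_1; simpl; [exact (Rmult_0_l _)|reflexivity].
Qed.

Lemma CV_radius_mulidx a : CV_radius (mulidx a) = CV_radius a.
Proof.
  rewrite <- (CV_radius_derive a), <- (CV_radius_incr_1 (PS_derive a)). apply CV_radius_ext.
  intros [|k]; unfold mulidx, PS_derive, PS_incr_1; simpl; [exact (Rmult_0_l _)|reflexivity].
Qed.

Lemma ball_R (x y : R) (e : posreal) : ball x e y <-> Rabs (y - x) < e.
Proof. reflexivity. Qed.

Lemma lt_of_left_limit (f : R -> R) x r :
  x < r -> (forall u v, x <= u -> u < v -> v < r -> f u < f v) ->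
  filterlim f (at_left r) (locally (f r)) -> f x < f r.
Proof.
  intros Hxr Hinc Hlim. set (y := (x + r) / 2).
  assert (Hxy : f x < f y) by (apply Hinc; unfold y; lra).
  enough (f y <= f r) by lra.
  destruct (Rle_or_lt (f y) (f r)) as [|Hgt]; [assumption|exfalso].
  assert (Heps : 0 < f y - f r) by lra.
  destruct (proj1 (filterlim_locally f (f r)) Hlim (mkposreal _ Heps)) as [d Hd].
  set (z := Rmax y (r - d / 2)).
  assert (Hz : y <= z < r)
    by (split; [apply Rmax_l|apply Rmax_lub_lt; destruct d; simpl; unfold y; lra]).
  assert (Hball : ball r d z).
  { apply ball_R. rewrite Rabs_left by lra. unfold z. destruct d as [d dp]; simpl.
    apply Rmax_case_strong; intros; unfold y in *; lra. }
  specialize (Hd z Hball (proj2 Hz)). change (Rabs (f z - f r) < f y - f r) in Hd.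
  apply Rabs_def2 in Hd.
  assert (f y <= f z)
    by (destruct (Req_dec y z) as [E|E]; [rewrite E; lra|left; apply Hinc; unfold y in *; lra]).
  lra.
Qed.

Lemma quotient_left_limit (N D : R -> R) r :
  filterlim N (at_left r) (locally (N r)) -> filterlim D (at_left r) (locally (D r)) ->
  D r <> 0 -> filterlim (fun z => N z / D z) (at_left r) (locally (N r / D r)).
Proof.
  intros HN HD HD0.
  apply (filterlim_comp_2 (G := locally (N r)) (H := locally (/ D r)) N (fun z => / D z) Rmult);
    [exact HN| |apply (filterlim_mult (K := R_AbsRing))].
  apply (filterlim_comp _ _ _ D Rinv _ (locally (D r))); [exact HD|].
  exact (continuous_Rinv _ HD0).
Qed.

(** ** The single-species system as power series in the fugacity *)

(* With c_k = 1/g(k)!, the normalisation is Z(x) = sum_k c_k x^k and the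
   first two unnormalised moments are M1(x) = sum_k k c_k x^k and
   M2(x) = sum_k k^2 c_k x^k; the density is M1/Z. *)
Section SingleSpecies.
Variable g : nat -> R.
Hypothesis g_pos : forall k, (0 < k)%nat -> 0 < g k.

Definition wcoef (k : nat) : R := / gfact g k.
Definition Zps (x : R) : R := PSeries wcoef x.
Definition M1ps (x : R) : R := PSeries (mulidx wcoef) x.
Definition M2ps (x : R) : R := PSeries (mulidx (mulidx wcoef)) x.
Definition density (x : R) : R := M1ps x / Zps x.
Definition radius : Rbar := CV_radius wcoef.

Definition density_deriv (x : R) : R :=
  (PSeries (PS_derive (mulidx wcoef)) x * Zps x - PSeries (PS_derive wcoef) x * M1ps x)
  / (Zps x)².

Lemma gfact_pos k : 0 < gfact g k.
Proof. induction k; simpl; [lra|]. apply Rmult_lt_0_compat; auto. apply g_pos; lia. Qed.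

Lemma wcoef_pos k : 0 < wcoef k.
Proof. apply Rinv_0_lt_compat, gfact_pos. Qed.

Lemma wcoef_0 : wcoef 0 = 1.
Proof. apply Rinv_1. Qed.

Lemma Zterm_wcoef x k : Zterm g x k = wcoef k * x ^ k.
Proof. unfold Zterm, wcoef, Rdiv. ring. Qed.

Lemma admissible_ex_pseries x :
  admissible g x -> ex_pseries wcoef x /\ ex_pseries (mulidx wcoef) x.
Proof.
  intros [_ [[l1 H1] [l2 H2]]]. split.
  - apply (ex_pseries_of_sum _ _ l1). refine (infinite_sum_ext _ _ _ _ H1).
    intros k; apply Zterm_wcoef.
  - apply (ex_pseries_of_sum _ _ l2). refine (infinite_sum_ext _ _ _ _ H2).
    intros k; rewrite Zterm_wcoef; unfold mulidx; ring.
Qed.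

Lemma Z_Zps x : ex_pseries wcoef x -> Defs.Z g x = Zps x.
Proof.
  intros H. apply Series_of_sum. refine (infinite_sum_ext _ _ _ _ (PSeries_sum _ _ H)).
  intros k; rewrite Zterm_wcoef; ring.
Qed.

Lemma M1_M1ps x : ex_pseries (mulidx wcoef) x -> M1 g x = M1ps x.
Proof.
  intros H. apply Series_of_sum. refine (infinite_sum_ext _ _ _ _ (PSeries_sum _ _ H)).
  intros k; rewrite Zterm_wcoef; unfold mulidx; ring.
Qed.

Lemma dens_density x : admissible g x -> dens g x = density x.
Proof.
  intros H. destruct (admissible_ex_pseries x H). unfold dens, density.
  rewrite Z_Zps, M1_M1ps; auto.
Qed.

Lemma admissible_radius x : admissible g x -> Rbar_le x radius.
Proof.
  intros H. destruct (admissible_ex_pseries x H) as [[l Hl] _]. destruct H as [H0 _].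
  apply (proj1 (Lub_Rbar_correct (CV_disk wcoef))). exists l.
  refine (is_series_ext _ _ _ _ Hl). intros k.
  rewrite pow_n_pow, Rabs_pos_eq by (apply Rmult_le_pos; [left; apply wcoef_pos|apply pow_le; auto]).
  unfold scal; simpl; unfold mult; simpl. ring.
Qed.

(* Z >= c_0 = 1, since all terms are nonnegative. *)
Lemma Zps_ge1 x : 0 <= x -> ex_pseries wcoef x -> 1 <= Zps x.
Proof.
  intros Hx H.
  assert (L : sum_f_R0 (fun k => wcoef k * x ^ k) 0 <= Zps x).
  { apply sum_incr; [exact (PSeries_sum _ _ H)|].
    intros k; apply Rmult_le_pos; [left; apply wcoef_pos|apply pow_le; auto]. }
  simpl in L. rewrite wcoef_0 in L. lra.
Qed.

Section Inside.
Variable x : R.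
Hypotheses (x_ge0 : 0 <= x) (x_inside : Rbar_lt x radius).

Lemma abs_inside : Rbar_lt (Rabs x) radius.
Proof. rewrite Rabs_pos_eq; auto. Qed.

Lemma ex_Zps : ex_pseries wcoef x.
Proof. apply CV_radius_inside, abs_inside. Qed.

Lemma ex_M1ps : ex_pseries (mulidx wcoef) x.
Proof. apply CV_radius_inside. rewrite CV_radius_mulidx. apply abs_inside. Qed.

Lemma ex_M2ps : ex_pseries (mulidx (mulidx wcoef)) x.
Proof. apply CV_radius_inside. rewrite !CV_radius_mulidx. apply abs_inside. Qed.

Lemma admissible_inside : admissible g x.
Proof.
  split; [auto|split].
  - exists (Zps x). refine (infinite_sum_ext _ _ _ _ (PSeries_sum _ _ ex_Zps)).
    intros k; rewrite Zterm_wcoef; ring.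
  - exists (M1ps x). refine (infinite_sum_ext _ _ _ _ (PSeries_sum _ _ ex_M1ps)).
    intros k; rewrite Zterm_wcoef; unfold mulidx; ring.
Qed.

Lemma density_derivative : derivable_pt_lim density x (density_deriv x).
Proof.
  change density with (M1ps / Zps)%F. unfold density_deriv.
  apply derivable_pt_lim_div.
  - apply is_derive_Reals, is_derive_PSeries. rewrite CV_radius_mulidx. apply abs_inside.
  - apply is_derive_Reals, is_derive_PSeries, abs_inside.
  - pose proof (Zps_ge1 x x_ge0 ex_Zps). lra.
Qed.

(* x D(x) = (M2 Z - M1^2) / Z^2: the density derivative is a variance. *)
Lemma density_deriv_variance : x * density_deriv x = (M2ps x * Zps x - (M1ps x)²) / (Zps x)².
Proof.
  pose proof (Zps_ge1 x x_ge0 ex_Zps).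
  unfold density_deriv, M2ps, M1ps. rewrite (PSeries_mulidx (mulidx wcoef)), (PSeries_mulidx wcoef).
  unfold Rsqr. field. lra.
Qed.

End Inside.

(* For 0 < x, the law (c_k x^k / Z)_k charges both 0 and 1, so its variance
   (M2 Z - M1^2)/Z^2 is positive: with mu = M1/Z,
   M2 - 2 mu M1 + mu^2 Z = sum_k (k - mu)^2 c_k x^k >= mu^2 + (1 - mu)^2 c_1 x. *)
Lemma variance_pos x : 0 < x -> Rbar_lt x radius -> 0 < M2ps x * Zps x - (M1ps x)².
Proof.
  intros Hx HR. assert (Hx0 : 0 <= x) by lra.
  pose proof (Zps_ge1 x Hx0 (ex_Zps x Hx0 HR)) as HZ.
  set (mu := M1ps x / Zps x).
  assert (Hsum : infinite_sum (fun k => (INR k - mu) ^ 2 * (wcoef k * x ^ k))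
                   (1 * (1 * M2ps x + -2 * mu * M1ps x) + mu ^ 2 * Zps x)).
  { refine (infinite_sum_ext _ _ _ _ (infinite_sum_lin _ _ _ _ 1 (mu ^ 2)
      (infinite_sum_lin _ _ _ _ 1 (-2 * mu) (PSeries_sum _ _ (ex_M2ps x Hx0 HR))
                                            (PSeries_sum _ _ (ex_M1ps x Hx0 HR)))
      (PSeries_sum _ _ (ex_Zps x Hx0 HR)))).
    intros k. unfold mulidx. ring. }
  assert (Hlow : sum_f_R0 (fun k => (INR k - mu) ^ 2 * (wcoef k * x ^ k)) 1
                 <= 1 * (1 * M2ps x + -2 * mu * M1ps x) + mu ^ 2 * Zps x).
  { apply sum_incr; [exact Hsum|]. intros k.
    apply Rmult_le_pos; [apply pow2_ge_0|apply Rmult_le_pos; [left; apply wcoef_pos|apply pow_le; auto]]. }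
  simpl in Hlow. rewrite wcoef_0 in Hlow.
  pose proof (wcoef_pos 1). assert (0 < wcoef 1 * x) by (apply Rmult_lt_0_compat; auto).
  assert (Hpos : 0 < mu * mu + (1 - mu) * (1 - mu) * (wcoef 1 * x)).
  { destruct (Req_dec mu 0) as [E|E]; [rewrite E; lra|].
    assert (0 < mu * mu) by (apply Rsqr_pos_lt in E; exact E).
    assert (0 <= (1 - mu) * (1 - mu) * (wcoef 1 * x)) by (apply Rmult_le_pos; [apply Rle_0_sqr|lra]).
    lra. }
  replace (M2ps x * Zps x - (M1ps x)²)
    with (Zps x * (1 * (1 * M2ps x + -2 * mu * M1ps x) + mu ^ 2 * Zps x))
    by (unfold mu, Rsqr; field; lra).
  apply Rmult_lt_0_compat; [lra|]. eapply Rlt_le_trans; [exact Hpos|]. lra.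
Qed.

Lemma density_deriv_pos x : 0 < x -> Rbar_lt x radius -> 0 < density_deriv x.
Proof.
  intros Hx HR. assert (Hx0 : 0 <= x) by lra.
  pose proof (Zps_ge1 x Hx0 (ex_Zps x Hx0 HR)).
  assert (0 < x * density_deriv x).
  { rewrite density_deriv_variance by auto. apply Rdiv_lt_0_compat; [apply variance_pos; auto|].
    unfold Rsqr; nra. }
  nra.
Qed.

(* By the mean value theorem the density is strictly increasing inside the
   disk of convergence ... *)
Lemma density_increasing_inside x y : 0 <= x -> x < y -> Rbar_lt y radius ->
  density x < density y.
Proof.
  intros Hx Hxy Hy.
  assert (Hin : forall c, x <= c <= y -> Rbar_lt c radius)
    by (intros c Hc; apply (Rbar_le_lt_trans c y); [simpl; lra|exact Hy]).
  destruct (MVT_cor2 density density_deriv x y Hxy) as [c [E Hc]].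
  { intros c Hc. apply density_derivative; [lra|apply Hin; lra]. }
  assert (0 < density_deriv c) by (apply density_deriv_pos; [lra|apply Hin; lra]).
  assert (0 < density_deriv c * (y - x)) by (apply Rmult_lt_0_compat; lra). lra.
Qed.

(* ... and, by Abel's theorem, also up to an admissible boundary point. *)
Lemma density_increasing_boundary r x :
  radius = Finite r -> admissible g r -> 0 <= x -> x < r -> density x < density r.
Proof.
  intros HR Hadm Hx Hxr. destruct (admissible_ex_pseries r Hadm) as [EZ EM].
  pose proof (Zps_ge1 r (proj1 Hadm) EZ).
  assert (Hpos : Rbar_lt 0 (Finite r)) by (simpl; lra).
  apply lt_of_left_limit; [exact Hxr| |].
  - intros u v Hu Huv Hv. apply density_increasing_inside; [lra|exact Huv|rewrite HR; exact Hv].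
  - unfold radius in HR. apply quotient_left_limit; [| |lra].
    + pose proof (Abel (mulidx wcoef)) as A. rewrite CV_radius_mulidx, HR in A.
      apply A; [exact Hpos|exact I|exact EM].
    + pose proof (Abel wcoef) as A. rewrite HR in A.
      apply A; [exact Hpos|exact I|exact EZ].
Qed.

Lemma density_increasing x y : admissible g x -> admissible g y -> x < y ->
  density x < density y.
Proof.
  intros [Hx0 _] Hy Hxy. pose proof (admissible_radius y Hy) as Ry.
  destruct radius as [r| |] eqn:HR; simpl in Ry.
  - destruct Ry as [Ry|<-]; [apply density_increasing_inside; auto; rewrite HR; exact Ry|].
    apply density_increasing_boundary; auto.
  - apply density_increasing_inside; auto. rewrite HR. exact I.
  - destruct Ry.
Qed.


End SingleSpecies.

(** ** The fugacity as the inverse of the density *)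

Section Fugacity.
Variable g : nat -> R.
Hypothesis g_pos : forall k, (0 < k)%nat -> 0 < g k.

Lemma fugacity_spec r : in_dom g r -> admissible g (phi_of g r) /\ density g (phi_of g r) = r.
Proof.
  intros [p Hp].
  destruct (epsilon_spec (inhabits 0) (fun phi => admissible g phi /\ dens g phi = r)
              (ex_intro _ p Hp)) as [A E].
  split; [exact A|]. rewrite <- dens_density by exact A. exact E.
Qed.

(* The density being injective, phi_of is its left inverse. *)
Lemma fugacity_of_density x : admissible g x -> phi_of g (density g x) = x.
Proof.
  intros Hx. destruct (fugacity_spec (density g x)) as [Hp Ep].
  { exists x. split; [exact Hx|apply dens_density, Hx]. }
  destruct (Rtotal_order (phi_of g (density g x)) x) as [L|[E|L]]; [|exact E|].
  - pose proof (density_increasing g g_pos _ _ Hp Hx L). lra.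
  - pose proof (density_increasing g g_pos _ _ Hx Hp L). lra.
Qed.

Lemma fugacity_increasing r r' : in_dom g r -> in_dom g r' -> r < r' -> phi_of g r < phi_of g r'.
Proof.
  intros Hr Hr' Hlt. destruct (fugacity_spec r Hr) as [A E], (fugacity_spec r' Hr') as [A' E'].
  destruct (Rlt_or_le (phi_of g r) (phi_of g r')) as [L|[L|L]]; [exact L| |rewrite L in E'; lra].
  pose proof (density_increasing g g_pos _ _ A' A L). lra.
Qed.

Section Interior.
Variable rho : R.
Hypothesis rho_interior : interior_dom g rho.

(* Near an interior density the fugacities stay in [0, radius): the fugacity
   of a slightly larger density is admissible, hence at most the radius. *)
Lemma fugacity_neighbourhood : exists d, 0 < d /\
  (forall r, Rabs (r - rho) <= d -> in_dom g r) /\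
  0 <= phi_of g (rho - d) /\ Rbar_lt (phi_of g (rho + d)) (radius g).
Proof.
  destruct rho_interior as [eps [Heps Hin]].
  assert (Hdom : forall r, Rabs (r - rho) <= 3 * eps / 4 -> in_dom g r) by (intros r Hr; apply Hin; lra).
  exists (eps / 2). split; [lra|split; [intros r Hr; apply Hdom; lra|split]].
  - apply fugacity_spec, Hdom, Rabs_le; lra.
  - apply (Rbar_lt_le_trans _ (phi_of g (rho + 3 * eps / 4))).
    + apply fugacity_increasing; [apply Hdom, Rabs_le; lra..|lra].
    + apply (admissible_radius g g_pos), fugacity_spec, Hdom, Rabs_le; lra.
Qed.

Lemma fugacity_inside : 0 < phi_of g rho /\ Rbar_lt (phi_of g rho) (radius g).
Proof.
  destruct fugacity_neighbourhood as [d [Hd [Hdom [Hlo Hhi]]]].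
  split.
  - apply (Rle_lt_trans _ (phi_of g (rho - d))); [exact Hlo|].
    apply fugacity_increasing; [apply Hdom, Rabs_le; lra..|lra].
  - apply (Rbar_le_lt_trans _ (phi_of g (rho + d))); [|exact Hhi].
    left; apply fugacity_increasing; [apply Hdom, Rabs_le; lra..|lra].
Qed.

(* Inverse function theorem: phi'(rho) = 1 / D(phi(rho)). *)
Lemma fugacity_derivative : derivable_pt_lim (phi_of g) rho (/ density_deriv g (phi_of g rho)).
Proof.
  destruct fugacity_neighbourhood as [d [Hd [Hdom [Hlo Hhi]]]].
  destruct fugacity_inside as [Hpos Hin].
  assert (Hlt : phi_of g (rho - d) < phi_of g rho < phi_of g (rho + d))
    by (split; apply fugacity_increasing; try lra; apply Hdom, Rabs_le; lra).
  assert (Hinc : phi_of g (rho - d) <= phi_of g rho <= phi_of g (rho + d)) by lra.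
  assert (Inside : forall a, phi_of g (rho - d) <= a <= phi_of g (rho + d) ->
                    0 <= a /\ Rbar_lt a (radius g))
    by (intros a Ha; split; [lra|apply (Rbar_le_lt_trans a (phi_of g (rho + d))); [simpl; lra|exact Hhi]]).
  assert (Prf : forall a, phi_of g (rho - d) <= a <= phi_of g (rho + d) -> derivable_pt (density g) a)
    by (intros a Ha; destruct (Inside a Ha); exists (density_deriv g a); apply density_derivative; auto).
  assert (Inv : forall r, rho - d <= r <= rho + d -> comp (density g) (phi_of g) r = id r)
    by (intros r Hr; unfold comp, id; apply fugacity_spec, Hdom, Rabs_le; lra).
  assert (Cont : continuity_pt (phi_of g) rho).
  { apply (Ranalysis5.continuity_pt_recip_prelim (density g) (phi_of g)
             (phi_of g (rho - d)) (phi_of g (rho + d))); [lra| | | |].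
    - intros x y Hx Hxy Hy. apply density_increasing_inside; auto; [lra|apply Inside; lra].
    - intros x Hx. apply fugacity_of_density. destruct (Inside x Hx). apply admissible_inside; auto.
    - intros a Ha. destruct (Inside a Ha).
      apply derivable_continuous_pt. exists (density_deriv g a). apply density_derivative; auto.
    - pose proof (Inv (rho - d)) as Elo. pose proof (Inv (rho + d)) as Ehi.
      unfold comp, id in Elo, Ehi. rewrite Elo, Ehi by lra. lra. }
  pose proof (density_deriv_pos g g_pos _ Hpos Hin) as HD.
  assert (Dv : derive_pt (density g) (phi_of g rho) (Prf _ Hinc) = density_deriv g (phi_of g rho))
    by (apply derive_pt_eq_0, density_derivative; auto; lra).
  pose proof (Ranalysis5.derivable_pt_lim_recip_interv (density g) (phi_of g) (rho - d) (rho + d) rho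
                Prf Cont ltac:(lra) ltac:(lra) Hinc Inv) as H.
  rewrite Dv in H. unfold Rdiv in H. rewrite Rmult_1_l in H. apply H. lra.
Qed.

End Interior.
End Fugacity.

(** ** Moments of nu_rho *)

Section Moments.
Variable g : nat -> R.
Hypothesis g_pos : forall k, (0 < k)%nat -> 0 < g k.

Lemma nu_wcoef r m : admissible g (phi_of g r) ->
  nu g r m = wcoef g m * phi_of g r ^ m / Zps g (phi_of g r).
Proof.
  intros H. destruct (admissible_ex_pseries g _ H) as [EZ _].
  unfold nu. rewrite Zterm_wcoef, Z_Zps; auto.
Qed.

Section InDomain.
Variable r : R.
Hypothesis r_dom : in_dom g r.

Lemma fugacity_series : admissible g (phi_of g r) /\ ex_pseries (wcoef g) (phi_of g r) /\
  ex_pseries (mulidx (wcoef g)) (phi_of g r) /\ 1 <= Zps g (phi_of g r).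
Proof.
  destruct (fugacity_spec g r r_dom) as [adm _].
  destruct (admissible_ex_pseries g _ adm) as [EZ EM].
  exact (conj adm (conj EZ (conj EM (Zps_ge1 g g_pos _ (proj1 adm) EZ)))).
Qed.

Lemma mean_series : infinite_sum (fun m => INR m * nu g r m) r.
Proof.
  destruct fugacity_series as [adm [_ [EM HZ]]].
  pose proof (proj2 (fugacity_spec g r r_dom)) as Hr. unfold density in Hr.
  set (phi := phi_of g r) in *.
  apply (infinite_sum_value _ (/ Zps g phi * M1ps g phi)); [|rewrite <- Hr; field; lra].
  refine (infinite_sum_ext _ _ _ _ (infinite_sum_scal _ _ _ (PSeries_sum _ _ EM))).
  intros m. rewrite nu_wcoef by exact adm; fold phi. unfold mulidx. field. lra.
Qed.

(* E_{nu_rho}[g] = phi(rho), since g(m) c_m = c_(m-1). *)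
Lemma g_series (g_zero : g O = 0) : infinite_sum (fun m => g m * nu g r m) (phi_of g r).
Proof.
  destruct fugacity_series as [adm [EZ [_ HZ]]].
  apply infinite_sum_from_1; [rewrite g_zero; ring|].
  set (phi := phi_of g r) in *.
  apply (infinite_sum_value _ (phi / Zps g phi * Zps g phi)); [|field; lra].
  refine (infinite_sum_ext _ _ _ _ (infinite_sum_scal _ _ _ (PSeries_sum _ _ EZ))).
  intros k. rewrite nu_wcoef by exact adm; fold phi. unfold wcoef. simpl gfact.
  pose proof (gfact_pos g g_pos k). pose proof (g_pos (S k) ltac:(lia)).
  simpl pow. field. split; lra.
Qed.

Lemma second_moment_series : Rbar_lt (phi_of g r) (radius g) ->
  infinite_sum (fun m => INR m ^ 2 * nu g r m) (M2ps g (phi_of g r) / Zps g (phi_of g r)).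
Proof.
  intros HR. destruct fugacity_series as [adm [_ [_ HZ]]].
  set (phi := phi_of g r) in *.
  apply (infinite_sum_value _ (/ Zps g phi * M2ps g phi)); [|field; lra].
  refine (infinite_sum_ext _ _ _ _
            (infinite_sum_scal _ _ _ (PSeries_sum _ _ (ex_M2ps g _ (proj1 adm) HR)))).
  intros m. rewrite nu_wcoef by exact adm; fold phi. unfold mulidx. field. lra.
Qed.

Lemma sigma2_of_second_moment E2 :
  infinite_sum (fun m => INR m ^ 2 * nu g r m) E2 -> sigma2 g r = E2 - r ^ 2.
Proof.
  intros H2. unfold sigma2. rewrite (Series_of_sum _ _ H2), (Series_of_sum _ _ mean_series).
  reflexivity.
Qed.

End InDomain.

Lemma interior_in_dom rho : interior_dom g rho -> in_dom g rho.
Proof. intros [eps [Heps Hin]]. apply Hin. rewrite Rminus_diag, Rabs_R0. exact Heps. Qed.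

(* At an interior density, sigma^2(rho) = phi D(phi): the variance is the
   logarithmic derivative of the density in the fugacity. *)
Lemma sigma2_fugacity rho : interior_dom g rho ->
  sigma2 g rho = phi_of g rho * density_deriv g (phi_of g rho).
Proof.
  intros Hint. pose proof (interior_in_dom rho Hint) as Hdom.
  destruct (fugacity_inside g g_pos rho Hint) as [Hpos HR].
  destruct (fugacity_spec g rho Hdom) as [_ Hdens].
  pose proof (Zps_ge1 g g_pos _ (Rlt_le _ _ Hpos) (ex_Zps g _ (Rlt_le _ _ Hpos) HR)).
  rewrite (sigma2_of_second_moment rho Hdom _ (second_moment_series rho Hdom HR)).
  rewrite density_deriv_variance by (auto; lra).
  set (phi := phi_of g rho) in *. rewrite <- Hdens. unfold density, Rsqr. field. lra.
Qed.

Lemma fugacity_derivative_sigma2 rho : interior_dom g rho ->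
  0 < phi_of g rho /\ 0 < sigma2 g rho /\
  derivable_pt_lim (phi_of g) rho (phi_of g rho / sigma2 g rho).
Proof.
  intros Hint. destruct (fugacity_inside g g_pos rho Hint) as [Hpos HR].
  pose proof (density_deriv_pos g g_pos _ Hpos HR) as HD.
  rewrite (sigma2_fugacity rho Hint).
  split; [exact Hpos|split; [apply Rmult_lt_0_compat; auto|]].
  replace (phi_of g rho / (phi_of g rho * density_deriv g (phi_of g rho)))
    with (/ density_deriv g (phi_of g rho)) by (field; lra).
  exact (fugacity_derivative g g_pos rho Hint).
Qed.

End Moments.

(** ** Expectations under the multi-colored invariant law *)

Section MultiColour.
Variables (g : nat -> R) (n : nat) (a : nat -> R).
Hypothesis g_pos : forall k, (0 < k)%nat -> 0 < g k.
Hypothesis rho_ne0 : vsum a n <> 0.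
Hypothesis rho_dom : in_dom g (vsum a n).

Lemma gtilde_formula (g_zero : g O = 0) i : (i < n)%nat ->
  gtilde g n i a = a i / vsum a n * phi_of g (vsum a n).
Proof.
  intros Hi. apply Series_of_sum.
  refine (infinite_sum_ext _ _ _ _ (infinite_sum_scal _ _ _ (g_series g g_pos _ rho_dom g_zero))).
  intros m. symmetry. apply level_sum_g_i; auto.
Qed.

Lemma coord_mean i : (i < n)%nat -> Ea g n a (fun k => coord k i) = a i.
Proof.
  intros Hi. apply Series_of_sum.
  apply (infinite_sum_value _ (a i / vsum a n * vsum a n)); [|field; auto].
  refine (infinite_sum_ext _ _ _ _ (infinite_sum_scal _ _ _ (mean_series g g_pos _ rho_dom))).
  intros m. symmetry. apply level_sum_coord; auto.
Qed.

Section SecondMoment.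
Variable E2 : R.
Hypothesis second_moment : infinite_sum (fun m => INR m ^ 2 * nu g (vsum a n) m) E2.

Lemma coord2_mean i j : (i < n)%nat -> (j < n)%nat ->
  Ea g n a (fun k => coord k i * coord k j) =
  a i / vsum a n * (a j / vsum a n) * (E2 - vsum a n) + (if Nat.eqb i j then a i else 0).
Proof.
  intros Hi Hj. apply Series_of_sum.
  set (al := a i / vsum a n * (a j / vsum a n)).
  set (be := - al + (if Nat.eqb i j then a i / vsum a n else 0)).
  apply (infinite_sum_value _ (al * E2 + be * vsum a n));
    [|unfold be; destruct (Nat.eqb i j); field; auto].
  refine (infinite_sum_ext _ _ _ _ (infinite_sum_lin _ _ _ _ al be second_moment
                                      (mean_series g g_pos _ rho_dom))).
  intros m. rewrite level_sum_coord2 by auto. unfold be, al. destruct (Nat.eqb i j); ring.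
Qed.

Lemma Gamma_formula i j : (i < n)%nat -> (j < n)%nat ->
  Gamma g n a i j = a i / vsum a n * (a j / vsum a n) * (sigma2 g (vsum a n) - vsum a n)
                    + (if Nat.eqb i j then a i else 0).
Proof.
  intros Hi Hj. unfold Gamma.
  rewrite coord2_mean, !coord_mean, (sigma2_of_second_moment g g_pos _ rho_dom _ second_moment)
    by auto.
  destruct (Nat.eqb i j); field; auto.
Qed.

End SecondMoment.
End MultiColour.

(** ** Partial derivatives of the mean jump rates *)

Lemma vsum_upd a j t n : (j < n)%nat -> vsum (upd a j t) n = vsum a n + (t - a j).
Proof.
  induction n as [|n IH]; intros Hj; [lia|]. simpl. unfold upd at 2.
  destruct (Nat.eqb_spec n j) as [<-|E].
  - rewrite (vsum_ext (upd a n t) a n); [ring|].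
    intros i Hi. unfold upd. destruct (Nat.eqb_spec i n); [lia|reflexivity].
  - rewrite IH by lia. ring.
Qed.

Lemma derivable_pt_lim_value f x l l' : derivable_pt_lim f x l -> l = l' -> derivable_pt_lim f x l'.
Proof. intros H <-. exact H. Qed.

(* Moving one coordinate a^j by t - c shifts the total density by t - c;
   this is the derivative of u(t)/rho(t) * psi(rho(t)) with rho(t) = rho + (t - c). *)
Lemma derivable_pt_lim_ratio_shift (u psi : R -> R) rho c du dpsi :
  derivable_pt_lim u c du -> derivable_pt_lim psi rho dpsi -> rho <> 0 ->
  derivable_pt_lim (fun t => u t / (rho + (t - c)) * psi (rho + (t - c))) c
    ((du * rho - u c) / rho ^ 2 * psi rho + u c / rho * dpsi).
Proof.
  intros Hu Hp Hr.
  assert (Hshift : derivable_pt_lim (fun t => rho + (t - c)) c 1)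
    by (apply is_derive_Reals; auto_derive; [auto|ring]).
  assert (Ec : rho + (c - c) = rho) by ring.
  assert (Hc : derivable_pt_lim (comp psi (fun t => rho + (t - c))) c (dpsi * 1))
    by (apply derivable_pt_lim_comp; [exact Hshift|rewrite Ec; exact Hp]).
  assert (Hnz : rho + (c - c) <> 0) by (rewrite Ec; exact Hr).
  pose proof (derivable_pt_lim_mult _ _ _ _ _
                (derivable_pt_lim_div u _ c du 1 Hu Hshift Hnz) Hc) as H.
  unfold comp, div_fct, mult_fct in H. rewrite Ec in H.
  replace ((du * rho - u c) / rho ^ 2 * psi rho + u c / rho * dpsi)
    with ((du * rho - 1 * u c) / rho² * psi rho + u c / rho * (dpsi * 1)) by (unfold Rsqr; field; auto).
  exact H.
Qed.

Lemma gtilde_partial g (g_zero : g O = 0) (g_pos : forall k, (0 < k)%nat -> 0 < g k)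
  n a0 i j : 0 < vsum a0 n -> interior_dom g (vsum a0 n) -> (i < n)%nat -> (j < n)%nat ->
  let rho := vsum a0 n in let phi := phi_of g rho in
  derivable_pt_lim (fun t => gtilde g n i (upd a0 j t)) (a0 j)
    ((if Nat.eqb i j then 1 else 0) * (phi / rho) + a0 i / rho * (phi / sigma2 g rho - phi / rho)).
Proof.
  intros Hr Hint Hi Hj rho phi. change (0 < rho) in Hr. change (interior_dom g rho) in Hint.
  destruct (fugacity_derivative_sigma2 g g_pos rho Hint) as [_ [Hs Hd]].
  pose proof Hint as [eps [Heps Hin]].
  set (u := fun t => if Nat.eqb i j then t else a0 i).
  assert (Hu : derivable_pt_lim u (a0 j) (if Nat.eqb i j then 1 else 0))
    by (unfold u; destruct (Nat.eqb i j);
        [apply derivable_pt_lim_id|apply derivable_pt_lim_const]).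
  assert (Hu0 : u (a0 j) = a0 i) by (unfold u; destruct (Nat.eqb_spec i j); congruence).
  apply is_derive_Reals.
  apply (is_derive_ext_loc (fun t => u t / (rho + (t - a0 j)) * phi_of g (rho + (t - a0 j)))).
  - (* near a0 j the shifted density stays positive and in the domain *)
    assert (Hd0 : 0 < Rmin eps rho) by (apply Rmin_glb_lt; auto).
    exists (mkposreal _ Hd0). intros t Ht. change (Rabs (t - a0 j) < Rmin eps rho) in Ht.
    pose proof (Rmin_l eps rho). pose proof (Rmin_r eps rho).
    assert (Hrho' : vsum (upd a0 j t) n = rho + (t - a0 j)) by (apply vsum_upd; exact Hj).
    assert (Hne : vsum (upd a0 j t) n <> 0) by (destruct (Rabs_def2 _ _ Ht); rewrite Hrho'; lra).
    assert (Hdom : in_dom g (vsum (upd a0 j t) n))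
      by (apply Hin; rewrite Hrho'; replace (rho + (t - a0 j) - rho) with (t - a0 j) by ring; lra).
    rewrite (gtilde_formula g n _ g_pos Hne Hdom g_zero i Hi), Hrho'. reflexivity.
  - apply is_derive_Reals.
    replace ((if Nat.eqb i j then 1 else 0) * (phi / rho) + a0 i / rho * (phi / sigma2 g rho - phi / rho))
      with (((if Nat.eqb i j then 1 else 0) * rho - u (a0 j)) / rho ^ 2 * phi_of g rho
            + u (a0 j) / rho * (phi / sigma2 g rho)) by (rewrite Hu0; unfold phi; field; lra).
    apply derivable_pt_lim_ratio_shift; auto. lra.
Qed.

(** ** The three conditions are each equivalent to sigma^2(rho0) = rho0 *)

Lemma div_eq_div_iff p s r : 0 < p -> 0 < s -> 0 < r -> (p / s - p / r = 0 <-> s = r).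
Proof.
  intros Hp Hs Hr. split; [|intros ->; ring].
  intros E. apply Rminus_diag_uniq in E. unfold Rdiv in E.
  apply Rmult_eq_reg_l in E; [|lra]. rewrite <- (Rinv_inv s), E, Rinv_inv. reflexivity.
Qed.

Section Equivalences.
Variables (g : nat -> R) (n : nat) (a0 : nat -> R).
Hypothesis g_zero : g O = 0.
Hypothesis g_pos : forall k, (0 < k)%nat -> 0 < g k.
Hypothesis two_colours : (2 <= n)%nat.
Hypothesis a0_pos : forall i, (i < n)%nat -> 0 < a0 i.
Hypothesis rho_interior : interior_dom g (vsum a0 n).

Lemma rho0_pos : 0 < vsum a0 n.
Proof. apply vsum_pos; [lia|exact a0_pos]. Qed.

Lemma fugacity_sigma2_pos : 0 < phi_of g (vsum a0 n) /\ 0 < sigma2 g (vsum a0 n).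
Proof. destruct (fugacity_derivative_sigma2 g g_pos _ rho_interior) as [? [? _]]. auto. Qed.

(* The off-diagonal partial d gtilde_0 / d a^1 is (a0^0/rho)(phi/sigma^2 - phi/rho),
   and all partials are delta_ij phi/rho once sigma^2 = rho. *)
Lemma FC_iff_sigma2 : FC g n a0 <-> sigma2 g (vsum a0 n) = vsum a0 n.
Proof.
  pose proof rho0_pos as Hr. destruct fugacity_sigma2_pos as [Hp Hs].
  pose proof (fun i j => gtilde_partial g g_zero g_pos n a0 i j Hr rho_interior) as Hpart.
  simpl in Hpart.
  set (rho := vsum a0 n) in *. set (phi := phi_of g rho) in *.
  rewrite <- (div_eq_div_iff phi (sigma2 g rho) rho) by auto.
  split.
  - intros [lam [_ Hoff]].
    pose proof (uniqueness_limite _ _ _ _ (Hoff 0%nat 1%nat ltac:(lia) ltac:(lia) ltac:(lia))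
                  (Hpart 0%nat 1%nat ltac:(lia) ltac:(lia))) as E.
    simpl Nat.eqb in E. pose proof (a0_pos 0%nat ltac:(lia)).
    assert (0 < a0 0%nat / rho) by (apply Rdiv_lt_0_compat; auto).
    apply (Rmult_eq_reg_l (a0 0%nat / rho)); lra.
  - intros K. exists (phi / rho). split.
    + intros i Hi. eapply derivable_pt_lim_value; [apply Hpart; auto|].
      rewrite Nat.eqb_refl, K. ring.
    + intros i j Hi Hj Hij. eapply derivable_pt_lim_value; [apply Hpart; auto|].
      apply Nat.eqb_neq in Hij. rewrite Hij, K. ring.
Qed.

(* At a0 the second moment of nu_rho0 is finite, so Gamma_formula applies. *)
Lemma Gamma_at_a0 i j : (i < n)%nat -> (j < n)%nat ->
  Gamma g n a0 i j = a0 i / vsum a0 n * (a0 j / vsum a0 n) * (sigma2 g (vsum a0 n) - vsum a0 n)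
                     + (if Nat.eqb i j then a0 i else 0).
Proof.
  intros Hi Hj. pose proof rho0_pos as Hr.
  pose proof (interior_in_dom g _ rho_interior) as Hdom.
  destruct (fugacity_inside g g_pos _ rho_interior) as [_ HR].
  apply (Gamma_formula g n a0 g_pos ltac:(lra) Hdom _ (second_moment_series g g_pos _ Hdom HR));
    assumption.
Qed.

(* Gamma_01 is a positive multiple of sigma^2 - rho; once sigma^2 = rho,
   Gamma is diag(a0) and gtilde_i = a0^i phi/rho, so both conditions hold. *)
Lemma Gamma_conditions_iff_sigma2 :
  ((forall i j, (i < n)%nat -> (j < n)%nat -> i <> j -> Gamma g n a0 i j = 0) /\
   (forall i j, (i < n)%nat -> (j < n)%nat -> i <> j ->
      gtilde g n i a0 * Gamma g n a0 j j = gtilde g n j a0 * Gamma g n a0 i i))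
  <-> sigma2 g (vsum a0 n) = vsum a0 n.
Proof.
  pose proof rho0_pos as Hr.
  pose proof (interior_in_dom g _ rho_interior) as Hdom.
  split.
  - intros [Hoff _]. pose proof (Hoff 0%nat 1%nat ltac:(lia) ltac:(lia) ltac:(lia)) as E.
    rewrite Gamma_at_a0 in E by lia. simpl Nat.eqb in E.
    pose proof (a0_pos 0%nat ltac:(lia)). pose proof (a0_pos 1%nat ltac:(lia)).
    assert (0 < a0 0%nat / vsum a0 n * (a0 1%nat / vsum a0 n))
      by (apply Rmult_lt_0_compat; apply Rdiv_lt_0_compat; auto).
    apply (Rmult_eq_reg_l (a0 0%nat / vsum a0 n * (a0 1%nat / vsum a0 n))); lra.
  - intros Hs. split.
    + intros i j Hi Hj Hij%Nat.eqb_neq. rewrite Gamma_at_a0, Hij, Hs by auto. ring.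
    + intros i j Hi Hj _. rewrite !Gamma_at_a0, !Nat.eqb_refl, Hs by auto.
      rewrite !(gtilde_formula g n a0 g_pos ltac:(lra) Hdom g_zero) by auto. field. lra.
Qed.

(* phi'(rho0) = phi/sigma^2, which equals phi/rho0 exactly when sigma^2 = rho0. *)
Lemma fugacity_derivative_iff_sigma2 :
  derivable_pt_lim (phi_of g) (vsum a0 n) (phi_of g (vsum a0 n) / vsum a0 n)
  <-> sigma2 g (vsum a0 n) = vsum a0 n.
Proof.
  pose proof rho0_pos as Hr. destruct fugacity_sigma2_pos as [Hp Hs].
  destruct (fugacity_derivative_sigma2 g g_pos _ rho_interior) as [_ [_ Hd]].
  rewrite <- (div_eq_div_iff (phi_of g (vsum a0 n))) by auto.
  split.
  - intros H. rewrite (uniqueness_limite _ _ _ _ Hd H). ring.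
  - intros K. eapply derivable_pt_lim_value; [exact Hd|lra].
Qed.

End Equivalences.

Theorem proposition7p4 (g : nat -> R)
  (hg0 : g O = 0) (hgpos : forall k, (0 < k)%nat -> 0 < g k)
  (n : nat) (hn : (2 <= n)%nat)
  (a0 : nat -> R) (ha0 : forall i, (i < n)%nat -> 0 < a0 i)
  (hint : interior_dom g (vsum a0 n)) :
  (FC g n a0 <->
     ((forall i j, (i < n)%nat -> (j < n)%nat -> i <> j -> Gamma g n a0 i j = 0) /\
      (forall i j, (i < n)%nat -> (j < n)%nat -> i <> j ->
         gtilde g n i a0 * Gamma g n a0 j j = gtilde g n j a0 * Gamma g n a0 i i)))
  /\
  (FC g n a0 <->
     derivable_pt_lim (phi_of g) (vsum a0 n) (phi_of g (vsum a0 n) / vsum a0 n))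
  /\
  (derivable_pt_lim (phi_of g) (vsum a0 n) (phi_of g (vsum a0 n) / vsum a0 n) <->
     sigma2 g (vsum a0 n) = vsum a0 n).
Proof.
  rewrite (FC_iff_sigma2 g n a0 hg0 hgpos hn ha0 hint),
          (Gamma_conditions_iff_sigma2 g n a0 hg0 hgpos hn ha0 hint),
          (fugacity_derivative_iff_sigma2 g n a0 hgpos hn ha0 hint).
  tauto.
Qed.
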